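(* Let $\sigma\in\mathcal{OR}_n$, and let $\mathcal L,\mathcal R,\mathcal H,\mathcal J,\mathcal D$ denote Green's relations on the monoid $\mathcal{OR}_n$. Then (i) $\mathcal L(\sigma)=\{\tau\in\mathcal{OR}_n: I(\tau)=I(\sigma)\}$; (ii) $\mathcal R(\sigma)=\{\tau\in\mathcal{OR}_n: J(\tau)=J(\sigma)\}$; (iii) $\mathcal H(\sigma)=\{\tau\in\mathcal{OR}_n: I(\tau)=I(\sigma)\text{ and } J(\tau)=J(\sigma)\}$; (iv) $\mathcal J(\sigma)=\{\tau\in\mathcal{OR}_n:\mathrm{rk}(\tau)=\mathrm{rk}(\sigma), \text{ and } \mathrm{tp}(\tau)=\mathrm{tp}(\sigma)\text{ if }\mathrm{rk}(\sigma)=m\}$; (v) $\mathcal D(\sigma)=\mathcal J(\sigma)$.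
   Context: Let $m\ge 1$, $n=2m$, $\mathbf n=\{1,\dots,n\}$, $\theta(i)=n+1-i$, written $\bar i$. A proper subset $I\subset\mathbf n$ is admissible if $I\cap\theta(I)=\emptyset$; $\mathbf n$ and $\emptyset$ are also admissible. For an injective partial map $\sigma$ of $\mathbf n$, $I(\sigma)$ is its domain, $J(\sigma)$ its image, $\mathrm{rk}(\sigma)=|I(\sigma)|$; products are compositions of partial maps. $W=\{\sigma\in S_n:\sigma(\bar i)=\overline{\sigma(i)}\ \forall i\}$, $W'=\{\sigma\in W:|\sigma(\{1,\dots,m\})\cap\{m+1,\dots,n\}|\text{ even}\}$. An admissible $m$-subset is of type I if it contains an even number of elements $>m$, type II otherwise. $\mathcal{OR}_n$ consists of the injective partial maps $\sigma$ with: $\mathrm{rk}(\sigma)<m$ and $I(\sigma),J(\sigma)$ admissible; or $\mathrm{rk}(\sigma)=m$ and $I(\sigma),J(\sigma)$ admissible of the same type; or $\sigma\in W'$. For $\mathrm{rk}(\sigma)=m$, $\mathrm{tp}(\sigma)$ is the type of $I(\sigma)$. For a Green relation $\mathcal K$, $\mathcal K(\sigma)$ denotes the class of $\sigma$. *)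

(* Partial injective maps on {1..n}, n = 2m, modelled on 'I_n
   (element i+1 of the paper <-> ordinal i). *)
From mathcomp Require Import all_boot all_order.
Set Implicit Arguments. Unset Strict Implicit. Unset Printing Implicit Defensive.

Section OR.
Variable m : nat.
Local Notation n := (2 * m).

Definition ppmap := {ffun 'I_n -> option 'I_n}.

(* theta(i) = n+1-i  <->  rev_ord *)
Definition theta (i : 'I_n) : 'I_n := rev_ord i.

Definition pinj (f : ppmap) : bool :=
  [forall i, forall j, (f i != None) ==> (f i == f j) ==> (i == j)].

Definition dom (f : ppmap) : {set 'I_n} := [set i | f i != None].
Definition img (f : ppmap) : {set 'I_n} := [set j | [exists i, f i == Some j]].
Definition rk (f : ppmap) : nat := #|dom f|.

Definition pmul (f g : ppmap) : ppmap := [ffun i => obind (fun j => f j) (g i)].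

Definition admissible (A : {set 'I_n}) : bool :=
  (A == setT) || (A == set0) ||
  ((A \proper setT) && (A :&: (theta @: A) == set0)).

(* elements > m of the paper are the ordinals with value >= m *)
Definition upper (A : {set 'I_n}) : {set 'I_n} := [set i in A | m <= val i].

Definition typeI (A : {set 'I_n}) : bool := ~~ odd #|upper A|.

Definition inW (f : ppmap) : bool :=
  pinj f && [forall i, f i != None] &&
  [forall i, f (theta i) == omap theta (f i)].

Definition inW' (f : ppmap) : bool :=
  inW f &&
  ~~ odd #|[set j | [exists i, (val i < m) && (f i == Some j)] & m <= val j]|.

Definition inOR (f : ppmap) : bool :=
  pinj f &&
  [|| (rk f < m) && admissible (dom f) && admissible (img f),
      [&& rk f == m, admissible (dom f), admissible (img f)
        & typeI (dom f) == typeI (img f)]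
    | inW' f].

Definition tp (f : ppmap) : bool := typeI (dom f).

Definition greenL (s t : ppmap) : Prop :=
  (exists2 a, inOR a & t = pmul a s) /\ (exists2 b, inOR b & s = pmul b t).
Definition greenR (s t : ppmap) : Prop :=
  (exists2 a, inOR a & t = pmul s a) /\ (exists2 b, inOR b & s = pmul t b).
Definition greenH (s t : ppmap) : Prop := greenL s t /\ greenR s t.
Definition greenJ (s t : ppmap) : Prop :=
  (exists a b, [/\ inOR a, inOR b & t = pmul (pmul a s) b]) /\
  (exists c d, [/\ inOR c, inOR d & s = pmul (pmul c t) d]).
Definition greenD (s t : ppmap) : Prop :=
  exists2 r, inOR r & greenL s r /\ greenR r t.

End OR.

From mathcomp Require Import all_boot all_order zify.
Set Implicit Arguments. Unset Strict Implicit. Unset Printing Implicit Defensive.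

(* Left and right multiplication only shrink images and domains, and when
   [dom t = dom s] (resp. [img t = img s]) the partial map [t s^-1]
   (resp. [s^-1 t]) lies in OR_n and recovers [t] from [s]; this yields the
   L-, R- and H-classes.  The crux is rank > m, where OR_n meets W in W'.
   Call [A] a theta-transversal if it meets every orbit {i, theta i} exactly
   once.  Counting orbit by orbit, for theta-transversals [A] and [P] the
   parities of |A & P|, |A & upper| and |lower & P| add up to zero; with
   P = F^-1(upper) this says that a theta-equivariant bijection F changes the
   parity of |A & upper| by the parity of its number of flips |F(lower) & upper|.
   Hence flip parity is a homomorphism on W, W' is a subgroup, and W'
   preserves the type of admissible m-sets.  So J-related maps have equal rank
   and, at rank m, equal type; conversely a bijection from [dom s] onto [img t]
   with the right type lies in OR_n and exhibits [s] D [t]. *)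

Section Theta.
Variable m : nat.
Local Notation n := (2 * m).
Local Notation T := 'I_n.
Local Notation th := (@theta m).

Lemma thetaK : involutive th.
Proof. exact: rev_ordK. Qed.

Lemma theta_inj : injective th.
Proof. exact: inv_inj thetaK. Qed.

Definition uppers : {set T} := [set i : T | m <= i].
Definition lowers : {set T} := ~: uppers.

Lemma in_lowers i : (i \in lowers) = (i < m).
Proof. by rewrite !inE -ltnNge. Qed.

Lemma theta_uppers i : (th i \in uppers) = (i \in lowers).
Proof. by rewrite !inE /theta /=; case: i => i /= ?; lia. Qed.

Definition theta_transversal (A : {set T}) : Prop := th @: A = ~: A.

Lemma mem_theta_transversal A :
  theta_transversal A -> forall i, (th i \in A) = (i \notin A).
Proof.
by move=> hA i; rewrite -in_setC -hA (can2_imset_pre _ thetaK thetaK) inE.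
Qed.

Lemma theta_transversal_lowers : theta_transversal lowers.
Proof.
apply/setP=> i; rewrite (can2_imset_pre _ thetaK thetaK) inE setCK.
by rewrite -theta_uppers thetaK.
Qed.

Lemma card_theta_orbits (X : {set T}) :
  #|X| = \sum_(i in lowers) ((i \in X) + (th i \in X)).
Proof.
rewrite -sum1_card big_mkcond (bigID (mem lowers)) /= big_split /=.
congr (_ + _).
rewrite (reindex_inj theta_inj) /=.
by apply: eq_big => [i|i _];
  [rewrite -[RHS]theta_uppers /lowers in_setC negbK | case: (_ \in X)].
Qed.

Lemma odd_card_transversalI (A P : {set T}) :
  theta_transversal A -> theta_transversal P ->
  odd #|A :&: P| = odd #|A :&: uppers| (+) odd #|lowers :&: P|.
Proof.
move=> hA hP.
suff: ~~ odd (#|A :&: P| + #|A :&: uppers| + #|lowers :&: P|).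
  by rewrite !oddD; case: (odd _); case: (odd _); case: (odd _).
rewrite !card_theta_orbits -!big_split /=.
(* each theta-orbit contributes an even number to the three counts *)
rewrite (eq_bigr (fun i => 2 * ((i \in P) + (i \notin A) && (i \notin P)))).
  by rewrite -big_distrr oddM.
move=> i iL; have iU : i \in uppers = false by move: iL; rewrite in_setC => /negbTE.
have thL : th i \in lowers = false by rewrite in_setC theta_uppers iL.
rewrite !in_setI (mem_theta_transversal hA) (mem_theta_transversal hP).
rewrite theta_uppers iL iU thL.
by case: (i \in A); case: (i \in P).
Qed.

Definition nflips (F : T -> T) : nat := #|F @: lowers :&: uppers|.

Lemma eq_nflips F G : F =1 G -> nflips F = nflips G.
Proof. by move=> eFG; rewrite /nflips (eq_imset _ eFG). Qed.

Lemma nflips_id : nflips id = 0.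
Proof. by rewrite /nflips imset_id setIC setICr cards0. Qed.

Section ThetaEquivariant.
Variable F : T -> T.
Hypothesis F_inj : injective F.
Hypothesis F_theta : forall i, F (th i) = th (F i).

Lemma imsetC_inj (A : {set T}) : F @: (~: A) = ~: (F @: A).
Proof. by rewrite !(can2_imset_pre _ (invF_f F_inj) (f_invF F_inj)) preimsetC. Qed.

Lemma theta_transversal_imset A :
  theta_transversal A -> theta_transversal (F @: A).
Proof.
rewrite /theta_transversal -imsetC_inj => <-.
by rewrite -!imset_comp; apply: eq_imset => i /=; rewrite F_theta.
Qed.

Lemma odd_card_imset_uppers A : theta_transversal A ->
  odd #|F @: A :&: uppers| = odd #|A :&: uppers| (+) odd (nflips F).
Proof.
move=> hA; pose P := F @^-1: uppers.
have hP : theta_transversal P.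
  apply/setP=> i; rewrite (can2_imset_pre _ thetaK thetaK) !inE F_theta.
  by have := theta_uppers (F i); rewrite !inE.
have cardP (X : {set T}) : #|F @: X :&: uppers| = #|X :&: P|.
  rewrite -[#|X :&: P|](card_imset _ F_inj); apply: eq_card => y.
  apply/setIP/imsetP => [[/imsetP[x xX ->] FxU] | [x /setIP[xX xP] ->]].
    by exists x; rewrite // inE xX inE.
  by split; [apply: imset_f | rewrite inE in xP].
by rewrite /nflips !cardP odd_card_transversalI // theta_transversal_lowers.
Qed.

End ThetaEquivariant.

Lemma odd_nflips_comp F G :
  injective F -> (forall i, F (th i) = th (F i)) ->
  injective G -> (forall i, G (th i) = th (G i)) ->
  odd (nflips (F \o G)) = odd (nflips F) (+) odd (nflips G).
Proof.
move=> F_inj F_theta G_inj G_theta.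
rewrite {1}/nflips imset_comp odd_card_imset_uppers //; last first.
  exact: theta_transversal_imset theta_transversal_lowers.
by rewrite addbC.
Qed.

End Theta.

Section PartialMaps.
Variable m : nat.
Local Notation T := 'I_(2 * m).
Local Notation pm := (ppmap m).

Definition pfun (f : pm) (i : T) : T := odflt i (f i).

Lemma in_dom (f : pm) i : (i \in dom f) = (f i != None).
Proof. by rewrite inE. Qed.

Lemma pfunE (f : pm) i : i \in dom f -> f i = Some (pfun f i).
Proof. by rewrite in_dom /pfun; case: (f i). Qed.

Lemma imgP (f : pm) j : reflect (exists i, f i = Some j) (j \in img f).
Proof. by rewrite inE; apply: (iffP existsP) => -[i /eqP]; exists i. Qed.

Lemma pinjP (f : pm) :
  reflect (forall i j k, f i = Some k -> f j = Some k -> i = j) (pinj f).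
Proof.
apply: (iffP forallP) => [finj i j k fi fj | finj i].
  by have /forallP/(_ j) := finj i; rewrite fi fj eqxx => /eqP.
apply/forallP=> j; apply/implyP; case fi: (f i) => [k|] // _.
by apply/implyP=> /eqP fj; apply/eqP/(finj i j k).
Qed.

Lemma pfun_inj (f : pm) : pinj f -> {in dom f &, injective (pfun f)}.
Proof.
move=> /pinjP finj i j iD jD eij.
by apply: (finj i j (pfun f i)); [exact: pfunE | rewrite eij; exact: pfunE].
Qed.

Lemma card_pfun_imset (f : pm) (X : {set T}) :
  pinj f -> X \subset dom f -> #|pfun f @: X| = #|X|.
Proof.
move=> finj /subsetP XD; apply: card_in_imset => i j iX jX.
by apply: pfun_inj; rewrite ?XD.
Qed.

Lemma img_pfun (f : pm) : img f = pfun f @: dom f.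
Proof.
apply/setP=> j; apply/imgP/imsetP => [[i fi] | [i iD ->]].
  by exists i; rewrite ?in_dom ?fi // /pfun fi.
by exists i; rewrite -pfunE.
Qed.

Lemma card_img (f : pm) : pinj f -> #|img f| = rk f.
Proof. by move=> finj; rewrite img_pfun card_pfun_imset. Qed.

Lemma pmulE (f g : pm) i : pmul f g i = obind f (g i).
Proof. by rewrite ffunE. Qed.

Lemma pmulA (f g h : pm) : pmul (pmul f g) h = pmul f (pmul g h).
Proof. by apply/ffunP=> i; rewrite !pmulE; case: (h i) => //= k; rewrite pmulE. Qed.

Lemma pinj_pmul (f g : pm) : pinj f -> pinj g -> pinj (pmul f g).
Proof.
move=> /pinjP finj /pinjP ginj; apply/pinjP=> i j k.
rewrite !pmulE; case gi: (g i) => [x|] //; case gj: (g j) => [y|] //= fx fy.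
by move: gi; rewrite (finj _ _ _ fx fy) => /ginj; apply.
Qed.

Lemma dom_pmul_sub (f g : pm) : dom (pmul f g) \subset dom g.
Proof. by apply/subsetP=> i; rewrite !in_dom pmulE; case: (g i). Qed.

Lemma img_pmul_sub (f g : pm) : img (pmul f g) \subset img f.
Proof.
apply/subsetP=> j /imgP[i]; rewrite pmulE; case: (g i) => //= k fk.
by apply/imgP; exists k.
Qed.

Lemma pfun_dom_pmul_sub (f g : pm) : pfun g @: dom (pmul f g) \subset dom f.
Proof.
apply/subsetP=> _ /imsetP[i + ->]; rewrite !in_dom pmulE /pfun.
by case: (g i).
Qed.

Lemma rk_pmul_ler (f g : pm) : rk (pmul f g) <= rk g.
Proof. exact/subset_leq_card/dom_pmul_sub. Qed.

Lemma rk_pmul_lel (f g : pm) : pinj g -> rk (pmul f g) <= rk f.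
Proof.
move=> ginj; rewrite /rk -(card_pfun_imset ginj (dom_pmul_sub f g)).
exact/subset_leq_card/pfun_dom_pmul_sub.
Qed.

Lemma dom_pmul (f g : pm) : img g \subset dom f -> dom (pmul f g) = dom g.
Proof.
move=> /subsetP gf; apply/setP=> i; rewrite !in_dom pmulE.
case gi: (g i) => [k|] //=; rewrite -in_dom; apply: gf.
by apply/imgP; exists i.
Qed.

Lemma img_pmul (f g : pm) : dom f \subset img g -> img (pmul f g) = img f.
Proof.
move=> fg; apply/eqP; rewrite eqEsubset img_pmul_sub; apply/subsetP=> j /imgP[k fk].
have /imgP[i gi] : k \in img g by apply: (subsetP fg); rewrite in_dom fk.
by apply/imgP; exists i; rewrite pmulE gi.
Qed.

Definition pinv (f : pm) : pm := [ffun j => [pick i | f i == Some j]].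

Lemma pinvP (f : pm) i j : pinj f -> pinv f j = Some i <-> f i = Some j.
Proof.
move=> /pinjP finj; rewrite ffunE; case: pickP => [x /eqP fx | nf]; split=> //.
- by case=> <-.
- by move=> fi; rewrite (finj _ _ _ fx fi).
- by move=> fi; have := nf i; rewrite fi eqxx.
Qed.

Lemma pinj_pinv (f : pm) : pinj (pinv f).
Proof.
apply/pinjP=> i j k; rewrite !ffunE.
case: pickP => // x /eqP fx [<-]; case: pickP => // y /eqP fy [exy].
by move: fy; rewrite exy fx => -[].
Qed.

Lemma dom_pinv (f : pm) : dom (pinv f) = img f.
Proof.
apply/setP=> j; rewrite in_dom ffunE; case: pickP => [x /eqP fx | nf] /=.
  by apply/esym/imgP; exists x.
by apply/esym/imgP=> -[i fi]; have := nf i; rewrite fi eqxx.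
Qed.

Lemma img_pinv (f : pm) : pinj f -> img (pinv f) = dom f.
Proof.
move=> finj; apply/setP=> i; rewrite in_dom; apply/imgP/idP => [[j] | ].
  by move/(pinvP _ _ finj) ->.
by case fi: (f i) => [j|] // _; exists j; apply/pinvP.
Qed.

Lemma pmul_pinvK (s t : pm) :
  pinj s -> dom t \subset dom s -> pmul (pmul t (pinv s)) s = t.
Proof.
move=> sinj /subsetP ts; apply/ffunP=> i; rewrite pmulE.
case si: (s i) => [j|] /=; first by rewrite pmulE (proj2 (pinvP _ _ sinj) si).
by case ti: (t i) => [k|] //; move: (ts i); rewrite !in_dom ti si => /(_ isT).
Qed.

Lemma pinv_pmulK (s t : pm) :
  pinj s -> img t \subset img s -> pmul s (pmul (pinv s) t) = t.
Proof.
move=> sinj /subsetP ts; apply/ffunP=> i; rewrite !pmulE.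
case ti: (t i) => [j|] //=.
have /imgP[k sk] : j \in img s by apply: ts; apply/imgP; exists i.
by rewrite (proj2 (pinvP _ _ sinj) sk).
Qed.

Lemma exists_pinj_dom_img (A B : {set T}) :
  #|A| = #|B| -> exists f : pm, [/\ pinj f, dom f = A & img f = B].
Proof.
move=> cardAB; set eA := enum A; set eB := enum B.
have sizeAB : size eA = size eB by rewrite -!cardE.
have idxA i : i \in A -> index i eA < size eB by rewrite -sizeAB index_mem mem_enum.
pose f : pm := [ffun i => if i \in A then Some (nth i eB (index i eA)) else None].
exists f; split.
- apply/pinjP=> i j k; rewrite !ffunE.
  case iA: (i \in A) => //; case jA: (j \in A) => // -[<-] [].
  rewrite (set_nth_default i) ?idxA // => /eqP; rewrite nth_uniq ?idxA ?enum_uniq //.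
  by move/eqP/esym; apply: (index_inj i); rewrite mem_enum.
- by apply/setP=> i; rewrite in_dom ffunE; case: (i \in A).
apply/setP=> k; apply/imgP/idP => [[i] | kB].
  by rewrite ffunE; case iA: (i \in A) => // -[<-]; rewrite -mem_enum mem_nth ?idxA.
have kidx : index k eB < size eA by rewrite sizeAB index_mem mem_enum.
exists (nth k eA (index k eB)).
rewrite ffunE -mem_enum mem_nth //= index_uniq ?enum_uniq //.
by rewrite (set_nth_default k) ?nth_index ?mem_enum // -sizeAB.
Qed.

End PartialMaps.

Section SignedPermutations.
Variable m : nat.
Local Notation T := 'I_(2 * m).
Local Notation pm := (ppmap m).
Local Notation th := (@theta m).

Lemma inW_total (f : pm) : inW f -> forall i, f i = Some (pfun f i).
Proof. by case/andP=> /andP[_ /forallP ftot] _ i; rewrite pfunE // in_dom. Qed.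

Lemma inW_pinj (f : pm) : inW f -> pinj f.
Proof. by case/andP=> /andP[]. Qed.

Lemma inW_pfun_inj (f : pm) : inW f -> injective (pfun f).
Proof.
move=> fW i j; apply: (pfun_inj (inW_pinj fW)); by rewrite in_dom inW_total.
Qed.

Lemma inW_theta (f : pm) : inW f -> forall i, f (th i) = omap th (f i).
Proof. by case/andP=> _ /forallP fth i; apply/eqP. Qed.

Lemma inW_pfun_theta (f : pm) : inW f -> forall i, pfun f (th i) = th (pfun f i).
Proof. by move=> fW i; rewrite /pfun inW_theta // (inW_total fW). Qed.

Lemma dom_inW (f : pm) : inW f -> dom f = setT.
Proof. by move=> fW; apply/setP=> i; rewrite in_dom inW_total ?inE. Qed.

Lemma img_inW (f : pm) : inW f -> img f = setT.
Proof.
move=> fW; apply/eqP; rewrite eqEcard subsetT card_img ?inW_pinj //.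
by rewrite /rk dom_inW /=.
Qed.

Lemma inW_pmul (f g : pm) : inW f -> inW g -> inW (pmul f g).
Proof.
move=> fW gW; apply/andP; split; first (apply/andP; split).
- exact: pinj_pmul (inW_pinj fW) (inW_pinj gW).
- by apply/forallP=> i; rewrite pmulE (inW_total gW) /= (inW_total fW).
apply/forallP=> i; rewrite !pmulE inW_theta // (inW_total gW) /=.
by rewrite inW_theta.
Qed.

Lemma inW_pinv (f : pm) : inW f -> inW (pinv f).
Proof.
move=> fW; have finj := inW_pinj fW.
have preim j : exists i, f i = Some j by apply/imgP; rewrite img_inW ?inE.
apply/andP; split; first (apply/andP; split).
- exact: pinj_pinv.
- by apply/forallP=> j; rewrite -in_dom dom_pinv img_inW.
apply/forallP=> j; have [i fi] := preim j.
rewrite (proj2 (pinvP _ _ finj) fi) /=; apply/eqP/pinvP => //.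
by rewrite inW_theta // fi.
Qed.

Lemma pfun_pmul_inW (f g : pm) :
  inW f -> inW g -> pfun (pmul f g) =1 pfun f \o pfun g.
Proof. by move=> fW gW i; rewrite /pfun pmulE (inW_total gW) /= (inW_total fW). Qed.

Lemma pfun_pinvK (f : pm) : inW f -> pfun f \o pfun (pinv f) =1 id.
Proof.
move=> fW j; have fiW := inW_pinv fW.
have /(pinvP _ _ (inW_pinj fW)) fj := inW_total fiW j.
by rewrite /= /pfun fj.
Qed.

Lemma odd_nflips_pmul (f g : pm) : inW f -> inW g ->
  odd (nflips (pfun (pmul f g))) = odd (nflips (pfun f)) (+) odd (nflips (pfun g)).
Proof.
move=> fW gW; rewrite (eq_nflips (pfun_pmul_inW fW gW)).
by apply: odd_nflips_comp; apply: inW_pfun_inj || apply: inW_pfun_theta.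
Qed.

Lemma odd_nflips_pinv (f : pm) : inW f ->
  odd (nflips (pfun (pinv f))) = odd (nflips (pfun f)).
Proof.
move=> fW; have fiW := inW_pinv fW.
have := odd_nflips_comp (inW_pfun_inj fW) (inW_pfun_theta fW)
  (inW_pfun_inj fiW) (inW_pfun_theta fiW).
rewrite (eq_nflips (pfun_pinvK fW)) nflips_id /=.
by case: (odd (nflips _)); case: (odd (nflips _)).
Qed.

Lemma inW'E (f : pm) : inW' f = inW f && ~~ odd (nflips (pfun f)).
Proof.
rewrite /inW' /nflips; case fW: (inW f) => //=; congr (~~ odd _).
apply: eq_card => j; rewrite !inE; congr (_ && _); apply/existsP/imsetP.
  by case=> i /andP[iL /eqP fi]; exists i; rewrite ?in_lowers // /pfun fi.
by case=> i; rewrite in_lowers => iL ->; exists i; rewrite iL; apply/eqP/inW_total.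
Qed.

Lemma inW'_inW (f : pm) : inW' f -> inW f.
Proof. by case/andP. Qed.

Lemma inW'_pmul (f g : pm) : inW' f -> inW' g -> inW' (pmul f g).
Proof.
rewrite !inW'E => /andP[fW fE] /andP[gW gE].
by rewrite inW_pmul // odd_nflips_pmul // (negbTE fE) (negbTE gE).
Qed.

Lemma inW'_pinv (f : pm) : inW' f -> inW' (pinv f).
Proof. by rewrite !inW'E => /andP[fW fE]; rewrite inW_pinv // odd_nflips_pinv. Qed.

Lemma upperE (A : {set T}) : upper A = A :&: uppers m.
Proof. by apply/setP=> i; rewrite !inE. Qed.

Lemma typeI_inW' (f : pm) (A : {set T}) : inW' f -> theta_transversal A ->
  typeI (pfun f @: A) = typeI A.
Proof.
rewrite inW'E => /andP[fW fE] hA.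
rewrite /typeI !upperE odd_card_imset_uppers ?(negbTE fE) ?addbF //.
  exact: inW_pfun_inj.
exact: inW_pfun_theta.
Qed.

End SignedPermutations.

Section GreenRelations.
Variable m : nat.
Hypothesis m_gt0 : 0 < m.
Local Notation T := 'I_(2 * m).
Local Notation pm := (ppmap m).

Lemma admissible_transversal (A : {set T}) :
  admissible A -> #|A| = m -> theta_transversal A.
Proof.
case/orP=> [/orP[/eqP-> | /eqP->] | /andP[_ /eqP AthA]] cardA.
- by exfalso; move: cardA; rewrite cardsT card_ord; lia.
- by exfalso; move: cardA; rewrite cards0; lia.
rewrite /theta_transversal; apply/eqP; rewrite eqEcard; apply/andP; split.
  apply/subsetP=> i ithA; rewrite inE; apply: contra_eqN AthA => iA.
  by apply/set0Pn; exists i; rewrite inE iA.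
have := cardsC A; rewrite card_ord card_imset ?cardA; last exact: theta_inj.
by move=> /(congr1 (subn^~ m)); rewrite addKn => ->; lia.
Qed.

Lemma rk_inW (f : pm) : inW f -> rk f = 2 * m.
Proof. by move=> fW; rewrite /rk dom_inW // cardsT card_ord. Qed.

Lemma inORP (f : pm) :
  reflect [/\ pinj f, admissible (dom f), admissible (img f),
              rk f = m -> typeI (dom f) = typeI (img f)
            & m < rk f -> inW' f]
          (inOR f).
Proof.
apply: (iffP andP) => [[finj] | [finj domA imgA typeE W'f]].
  case/or3P=> [/andP[/andP[rk_lt ? ?]] | /and4P[/eqP rk_eq ? ? /eqP ?] | W'f].
  - by split=> // rk_f; exfalso; lia.
  - by split=> // rk_f; exfalso; lia.
  have fW : inW f by move: W'f; rewrite inW'E => /andP[].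
  by split; rewrite ?dom_inW ?img_inW ?rk_inW ?/admissible ?eqxx //; lia.
split=> //; case: (ltngtP (rk f) m) => rk_f.
- by rewrite domA imgA.
- by rewrite W'f ?orbT.
- by rewrite domA imgA typeE // eqxx.
Qed.

Lemma typeI_pfun_imset (f : pm) (A : {set T}) : inOR f ->
  admissible A -> #|A| = m -> A \subset dom f -> typeI (pfun f @: A) = typeI A.
Proof.
case/inORP=> _ _ _ typeE W'f admA cardA Adom.
have [rk_f | rk_f] := ltnP m (rk f).
  by apply: typeI_inW'; [exact: W'f | exact: admissible_transversal].
have domA : dom f = A by apply/esym/eqP; rewrite eqEcard Adom cardA.
by rewrite -domA -img_pfun typeE // /rk domA.
Qed.

Lemma inOR_pmul_pinv (s t : pm) :
  inOR s -> inOR t -> dom t = dom s -> inOR (pmul t (pinv s)).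
Proof.
move=> /inORP[sinj _ simg stype sW'] /inORP[tinj _ timg ttype tW'] dts.
have adom : dom (pmul t (pinv s)) = img s.
  by rewrite dom_pmul ?dom_pinv // img_pinv // dts.
have aimg : img (pmul t (pinv s)) = img t by rewrite img_pmul // img_pinv // dts.
have rka : rk (pmul t (pinv s)) = rk s by rewrite /rk adom card_img.
have rkt : rk t = rk s by rewrite /rk dts.
apply/inORP; split; rewrite ?adom ?aimg ?rka //.
- exact: pinj_pmul tinj (pinj_pinv s).
- by move=> rks; rewrite -stype // -ttype ?dts ?rkt.
- move=> rks; apply: inW'_pmul; first by apply: tW'; rewrite rkt.
  by apply: inW'_pinv; apply: sW'.
Qed.

Lemma inOR_pinv_pmul (s t : pm) :
  inOR s -> inOR t -> img t = img s -> inOR (pmul (pinv s) t).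
Proof.
move=> /inORP[sinj sdom _ stype sW'] /inORP[tinj tdom _ ttype tW'] its.
have adom : dom (pmul (pinv s) t) = dom t by rewrite dom_pmul // dom_pinv its.
have aimg : img (pmul (pinv s) t) = dom s by rewrite img_pmul ?img_pinv // dom_pinv its.
have rkt : rk t = rk s by rewrite -!card_img ?its.
have rka : rk (pmul (pinv s) t) = rk s by rewrite -rkt /rk adom.
apply/inORP; split; rewrite ?adom ?aimg ?rka //.
- exact: pinj_pmul (pinj_pinv s) tinj.
- by move=> rks; rewrite ttype ?rkt // its stype.
- move=> rks; apply: inW'_pmul; first by apply: inW'_pinv; apply: sW'.
  by apply: tW'; rewrite rkt.
Qed.

Lemma greenL_dom (s t : pm) : inOR s -> inOR t -> greenL s t <-> dom t = dom s.
Proof.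
move=> sOR tOR; split=> [[[a _ tas] [b _ sbt]] | dts].
  apply/eqP; rewrite eqEsubset; apply/andP; split.
    by rewrite {1}tas dom_pmul_sub.
  by rewrite {1}sbt dom_pmul_sub.
have /inORP[sinj _ _ _ _] := sOR; have /inORP[tinj _ _ _ _] := tOR.
split; [exists (pmul t (pinv s)) | exists (pmul s (pinv t))];
  rewrite ?inOR_pmul_pinv ?pmul_pinvK ?dts //.
Qed.

Lemma greenR_img (s t : pm) : inOR s -> inOR t -> greenR s t <-> img t = img s.
Proof.
move=> sOR tOR; split=> [[[a _ tsa] [b _ stb]] | its].
  apply/eqP; rewrite eqEsubset; apply/andP; split.
    by rewrite {1}tsa img_pmul_sub.
  by rewrite {1}stb img_pmul_sub.
have /inORP[sinj _ _ _ _] := sOR; have /inORP[tinj _ _ _ _] := tOR.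
split; [exists (pmul (pinv s) t) | exists (pmul (pinv t) s)];
  rewrite ?inOR_pinv_pmul ?pinv_pmulK ?its //.
Qed.

Lemma greenD_greenJ (s t : pm) : greenD s t -> greenJ s t.
Proof.
case=> r _ [[[a aOR ras] [b bOR sbr]] [[c cOR trc] [d dOR rtd]]]; split.
  by exists a, c; rewrite trc ras.
by exists b, d; rewrite {1}sbr rtd pmulA.
Qed.

Lemma greenJ_rk_tp (s t : pm) : inOR s -> inOR t -> greenJ s t ->
  rk t = rk s /\ (rk s = m -> tp t = tp s).
Proof.
move=> sOR tOR [[a [b [_ bOR ts]]] [c [d [_ dOR st]]]].
have /inORP[binj _ _ _ _] := bOR; have /inORP[dinj _ _ _ _] := dOR.
have rk_ts : rk t <= rk s by rewrite ts (leq_trans (rk_pmul_lel _ binj)) ?rk_pmul_ler.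
have rk_st : rk s <= rk t by rewrite st (leq_trans (rk_pmul_lel _ dinj)) ?rk_pmul_ler.
have rkts : rk t = rk s by apply/eqP; rewrite eqn_leq rk_ts rk_st.
split=> // rks.
have /inORP[_ tdom _ _ _] := tOR.
have domtb : dom t \subset dom b by rewrite ts dom_pmul_sub.
have bdom_sub : pfun b @: dom t \subset dom s.
  by rewrite {1}ts; apply: subset_trans (pfun_dom_pmul_sub _ _) (dom_pmul_sub _ _).
have bdom : pfun b @: dom t = dom s.
  by apply/eqP; rewrite eqEcard bdom_sub card_pfun_imset //= -/(rk t) rkts.
by rewrite /tp -bdom typeI_pfun_imset // -/(rk t) rkts.
Qed.

Lemma greenD_of_rk_tp (s t : pm) : inOR s -> inOR t ->
  rk t = rk s -> (rk s = m -> tp t = tp s) -> greenD s t.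
Proof.
move=> sOR tOR rkts tpts.
have /inORP[_ sdom _ _ sW'] := sOR; have /inORP[tinj _ timg ttype tW'] := tOR.
have [rks | rks] := ltnP m (rk s).
  exists s => //; split; first exact/greenL_dom.
  have sW : inW s by apply/inW'_inW/sW'.
  have tW : inW t by apply/inW'_inW/tW'; rewrite rkts.
  by apply/greenR_img => //; rewrite !img_inW.
have [r [rinj rdom rimg]] : exists r : pm, [/\ pinj r, dom r = dom s & img r = img t].
  by apply: exists_pinj_dom_img; rewrite card_img // rkts.
have rrk : rk r = rk s by rewrite /rk rdom.
have rOR : inOR r.
  apply/inORP; split; rewrite ?rdom ?rimg ?rrk //.
    by move=> rksm; rewrite -ttype ?rkts // -/(tp t) tpts.
  by rewrite ltnNge rks.
by exists r => //; split; [apply/greenL_dom | apply/greenR_img].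
Qed.

End GreenRelations.

Theorem proposition3p3 (m : nat) (hm : 0 < m) (s : ppmap m) (hs : inOR s) :
  forall t : ppmap m, inOR t ->
  [/\ greenL s t <-> dom t = dom s,
      greenR s t <-> img t = img s,
      greenH s t <-> dom t = dom s /\ img t = img s,
      greenJ s t <-> rk t = rk s /\ (rk s = m -> tp t = tp s)
    & greenD s t <-> greenJ s t].
Proof.
move=> t ht.
have hL := greenL_dom hm hs ht; have hR := greenR_img hm hs ht.
have hJ := greenJ_rk_tp hm hs ht; have hD := greenD_of_rk_tp hm hs ht.
split=> //.
- by rewrite /greenH hL hR.
- by split=> [/hJ | [rkts tpts]]; last exact/greenD_greenJ/hD.
- by split=> [/greenD_greenJ | /hJ[rkts tpts]]; last exact: hD.
Qed.
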